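(* Let $Y$ be a real random variable with $\mathbb E[Y]=0$ such that for some $\theta>0$, $\Pr[|Y|\ge\xi]\le 2e^{-\xi^2\theta^2/2}$ for all $\xi\ge0$. Then for every $a>0$, $$\Pr[Y\ge0]\ge\frac{\operatorname{Var}[Y]}{2a^2}-2e^{-a^2\theta^2/2}\left(1+\sqrt2+\frac{\sqrt{2\pi}}{a\theta}+\frac{1}{a^2\theta^2}\right).$$ *)

From mathcomp Require Import all_boot all_order all_algebra.
From mathcomp Require Import all_classical all_reals all_analysis.

(* Since E[Y] = 0 we have E[Y^+] = E[Y^-], so integrating the pointwise bound
     y^2 + a y^+ <= 2a^2 [y >= 0] + 3a^2 [|y| >= a] + 2a (|y| - a)^+ + (y^2 - a^2)^+ + a y^-
   and cancelling a E[Y^+] against a E[Y^-] bounds Var[Y] = E[Y^2] by 2a^2 Pr[Y >= 0]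
   plus tail terms.  A tail expectation E[(Z - b)^+] is at most s * sum_k Pr[Z >= b + k s]
   (a discretised layer-cake formula), and the sub-Gaussian hypothesis makes these
   probabilities decay geometrically once the step s is scaled by 1/theta^2.  When
   a theta < 1 the cruder bound E[Y^2] <= 4 / theta^2 suffices, as
   exp(-a^2 theta^2 / 2) >= 1 - a^2 theta^2 / 2. *)

From mathcomp Require Import all_boot all_order all_algebra.
From mathcomp Require Import all_classical all_reals all_analysis.
From mathcomp Require Import ring lra measurable_realfun.
Import Order.TTheory GRing.Theory Num.Theory.
Local Open Scope classical_set_scope.
Local Open Scope ring_scope.

Ltac solve_ge0 := repeat first [ done | exact: ler0n | (apply: ltW; assumption)
  | apply: sqr_ge0 | apply: addr_ge0 | apply: mulr_ge0 | apply: exprn_ge0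
  | (by rewrite le_max lexx orbT) | (by rewrite indicE) ].

Ltac solve_measurable := repeat first [ assumption | exact: measurable_cst
  | apply: measurable_funD | apply: measurable_funM | apply: measurable_funB
  | apply: measurable_maxr | apply: measurable_funX | apply: measurable_indic
  | (apply: measurableT_comp; [exact: normr_measurable |])
  | (apply: measurableT_comp; [exact: oppr_measurable |]) ].

Lemma expRN_le_geometric (R : realType) (x b t : R) (k : nat) :
  0 <= t -> b + k%:R * t <= x -> expR (- x) <= expR (- b) * ((1 + t)^-1) ^+ k.
Proof.
move=> t0 lex.
have exp_t : expR (- t) <= (1 + t)^-1.
  by rewrite expRN lef_pV2 ?posrE ?expR_gt0 ?ltr_wpDr // expR_ge1Dx.
apply: le_trans (_ : expR (- b) * expR (- t) ^+ k <= _).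
  by rewrite -expRM_natl -expRD ler_expR mulrN -opprD lerN2.
by rewrite ler_wpM2l ?expR_ge0 // lerXn2r // ?nnegrE ?expR_ge0 ?invr_ge0 ?addr_ge0.
Qed.

Lemma nneseries_geometric_le (R : realType) (c q : R) : 0 <= c -> 0 < q < 1 ->
  (\sum_(k <oo) (c * q ^+ k)%:E <= (c / (1 - q))%:E)%E.
Proof.
move=> c0 /andP[q0 q1].
apply: lime_le.
  by apply: is_cvg_nneseries => n _ _; rewrite lee_fin mulr_ge0 // exprn_ge0 // ltW.
apply: nearW => n; rewrite sumEFin lee_fin.
by have := geometric_le_lim n c0 q0; rewrite gtr0_norm //; apply.
Qed.

Lemma sqr_add_pos_part_le (R : realFieldType) (a y : R) : 0 < a ->
  y ^+ 2 + a * Num.max y 0 <=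
    2 * a ^+ 2 * (0 <= y)%R%:R + 3 * a ^+ 2 * (a <= `|y|)%R%:R
    + 2 * a * Num.max (`|y| - a) 0 + Num.max (y ^+ 2 - a ^+ 2) 0
    + a * Num.max (- y) 0.
Proof.
move=> a0.
have max_ge (x : R) : x <= Num.max x 0 /\ 0 <= Num.max x 0.
  by split; rewrite le_max lexx ?orbT.
have [m1 m2] := max_ge (`|y| - a).
have [m3 m4] := max_ge (y ^+ 2 - a ^+ 2).
have [m5 m6] := max_ge (- y).
have [y0|y0] := lerP 0 y.
  rewrite ger0_norm // in m1 m2 *; rewrite mulr1.
  have [ay|ay] := lerP a y; rewrite /= ?mulr1 ?mulr0; nra.
rewrite ltr0_norm // in m1 m2 *; rewrite mulr0.
have [ay|ay] := lerP a (- y); rewrite /= ?mulr1 ?mulr0; nra.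
Qed.

Lemma measurable_ge_set d (T : measurableType d) (R : realType) (f : T -> R) (c : R) :
  measurable_fun setT f -> measurable [set w | c <= f w].
Proof.
move=> mf; rewrite -[X in measurable X]setTI.
have -> : [set w | c <= f w] = f @^-1` `[c, +oo[.
  by apply/seteqP; split => w /=; rewrite in_itv /= andbT.
exact: mf.
Qed.

Lemma pos_part_le_step_series (T : Type) (R : realType) (Z : T -> R) (b s : R) (w : T) :
  0 < s ->
  ((Num.max (Z w - b) 0)%:E <=
   s%:E * \sum_(k <oo) (\1_[set x | b + k%:R * s <= Z x] w)%:E)%E.
Proof.
move=> s0.
have ind_ge0 k : (0 <= (\1_[set x | b + k%:R * s <= Z x] w : R)%:E)%E.
  by rewrite lee_fin.
have [Zb|bZ] := ltP (Z w) b.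
  rewrite (max_idPr _); last by rewrite subr_le0 ltW.
  by apply: mule_ge0; [rewrite lee_fin ltW | apply: nneseries_ge0].
set m := Num.truncn ((Z w - b) / s).
have first_steps : ((m.+1%:R : R)%:E <=
    \sum_(k <oo) (\1_[set x | b + k%:R * s <= Z x] w)%:E)%E.
  have := @nneseries_lim_ge R (fun k => (\1_[set x | b + k%:R * s <= Z x] w)%:E)
    (fun=> true) 0 m.+1 (fun k _ _ => ind_ge0 k).
  apply: le_trans.
  rewrite (eq_big_nat _ _ (F2 := fun=> 1%:E)); last first.
    move=> i /andP[_ im]; rewrite indicE mem_set //=.
    rewrite addrC -lerBrDr -ler_pdivlMr //.
    apply: le_trans (_ : m%:R <= _); first by rewrite ler_nat -ltnS.
    by rewrite truncn_le divr_ge0 ?subr_ge0 // ltW.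
  by rewrite sumEFin sumr_const_nat subn0.
apply: le_trans (_ : s%:E * (m.+1%:R)%:E <= _)%E; last by rewrite lee_pmul2l ?lte_fin.
rewrite -EFinM lee_fin ge_max (mulr_ge0 (ltW s0)) // andbT.
by rewrite mulrC -ler_pdivrMr //; apply/ltW/truncnS_gt.
Qed.

Section nonneg_integrals.
Context {d} {T : measurableType d} {R : realType} (mu : {measure set T -> \bar R}).

Lemma ge0_integralD_real (f g : T -> R) :
  measurable_fun setT f -> measurable_fun setT g ->
  (forall w, 0 <= f w) -> (forall w, 0 <= g w) ->
  (\int[mu]_w (f w + g w)%:E = \int[mu]_w (f w)%:E + \int[mu]_w (g w)%:E)%E.
Proof.
move=> mf mg f0 g0; under eq_integral do rewrite EFinD.
apply: ge0_integralD => //.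
- by move=> w _; rewrite lee_fin.
- exact/measurable_EFinP.
- by move=> w _; rewrite lee_fin.
- exact/measurable_EFinP.
Qed.

Lemma ge0_integralZl_real (k : R) (f : T -> R) :
  0 <= k -> measurable_fun setT f -> (forall w, 0 <= f w) ->
  (\int[mu]_w (k * f w)%:E = k%:E * \int[mu]_w (f w)%:E)%E.
Proof.
move=> k0 mf f0; under eq_integral do rewrite EFinM.
apply: ge0_integralZl_EFin => //.
- by move=> w _; rewrite lee_fin.
- exact/measurable_EFinP.
Qed.

Lemma integral_pos_part_le_geometric (Z : T -> R) (b s c q : R) :
  measurable_fun setT Z -> 0 < s -> 0 <= c -> 0 < q < 1 ->
  (forall k : nat, mu [set w | (b + k%:R * s <= Z w)%R] <= (c * q ^+ k)%:E)%E ->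
  (\int[mu]_w (Num.max (Z w - b) 0)%:E <= (s * (c / (1 - q)))%:E)%E.
Proof.
move=> mZ s0 c0 q01 tailZ.
pose step k := [set w | (b + k%:R * s <= Z w)%R].
have mstep k : measurable (step k) by exact: measurable_ge_set.
have mind k : measurable_fun setT (fun w => (\1_(step k) w : R)%:E).
  exact/measurable_EFinP/measurable_indic.
apply: le_trans (_ : \int[mu]_w (s%:E * \sum_(k <oo) (\1_(step k) w)%:E) <= _)%E.
  apply: ge0_le_integral => //.
  - by move=> w _; rewrite lee_fin le_max lexx orbT.
  - apply/measurable_EFinP/measurable_maxr => //.
    exact: measurable_funB.
  - by apply/measurable_funeM/ge0_emeasurable_sum => // k _.
  - by move=> w _; exact: pos_part_le_step_series.
have s_ge0 := ltW s0.
rewrite ge0_integralZl_EFin //; first last.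
  - by apply: ge0_emeasurable_sum => // k _.
  - by move=> w _; apply: nneseries_ge0.
rewrite integral_nneseries // EFinM lee_pmul2l ?lte_fin //.
apply: le_trans (nneseries_geometric_le _ _ _ c0 q01).
apply: lee_nneseries => [k _ _|k _]; first exact: integral_ge0.
by rewrite integral_indic // setIT; apply: tailZ.
Qed.

Lemma integral_pos_part_eq_neg_part (f : T -> R) :
  (\int[mu]_w (f w)%:E = 0)%E ->
  (\int[mu]_w (Num.max (- f w) 0)%:E)%E \is a fin_num ->
  (\int[mu]_w (Num.max (f w) 0)%:E = \int[mu]_w (Num.max (- f w) 0)%:E)%E.
Proof.
move=> f0 fin_neg.
have : (\int[mu]_w (Num.max (f w) 0)%:E - \int[mu]_w (Num.max (- f w) 0)%:E = 0)%E.
  rewrite -f0 (integralE _ _ (fun w => (f w)%:E)); congr (_ - _)%E.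
    by apply: eq_integral => w _; rewrite funeposE EFin_max.
  by apply: eq_integral => w _; rewrite funenegE EFin_max EFinN.
by move=> diff0; rewrite -[LHS](subeK _ fin_neg) diff0 add0e.
Qed.

Lemma integral_sqr_le_tails (f : T -> R) (a : R) :
  measurable_fun setT f -> 0 < a ->
  (\int[mu]_w (f w)%:E = 0)%E ->
  (\int[mu]_w (Num.max (- f w) 0)%:E)%E \is a fin_num ->
  (\int[mu]_w (f w ^+ 2)%:E <= (2 * a ^+ 2)%:E * mu [set w | (0 <= f w)%R]
     + (3 * a ^+ 2)%:E * mu [set w | (a <= `|f w|)%R]
     + (2 * a)%:E * \int[mu]_w (Num.max (`|f w| - a) 0)%:E
     + \int[mu]_w (Num.max (f w ^+ 2 - a ^+ 2) 0)%:E)%E.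
Proof.
move=> mf a0 f0 fin_neg.
set S := [set w | 0 <= f w]; set A := [set w | a <= `|f w|].
have mS : measurable S by exact: measurable_ge_set.
have mA : measurable A by apply: measurable_ge_set; solve_measurable.
have : (\int[mu]_w (f w ^+ 2 + a * Num.max (f w) 0)%:E <=
    \int[mu]_w (2 * a ^+ 2 * \1_S w + 3 * a ^+ 2 * \1_A w
      + 2 * a * Num.max (`|f w| - a) 0 + Num.max (f w ^+ 2 - a ^+ 2) 0
      + a * Num.max (- f w) 0)%:E)%E.
  apply: ge0_le_integral => //.
  - by move=> w _; rewrite lee_fin; solve_ge0.
  - by apply/measurable_EFinP; solve_measurable.
  - by apply/measurable_EFinP; solve_measurable.
  - have memE (P : pred T) w : (w \in [set x | P x]) = P w.
      by apply/idP/idP; rewrite inE.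
    by move=> w _; rewrite lee_fin !indicE !memE; exact: sqr_add_pos_part_le.
rewrite !ge0_integralD_real ?ge0_integralZl_real.
all: try by [solve_measurable | move=> ?; solve_ge0 | solve_ge0].
rewrite !integral_indic // !setIT integral_pos_part_eq_neg_part //.
by rewrite leeD2rE // fin_numM.
Qed.

End nonneg_integrals.

Section subgaussian.
Context {d} {T : measurableType d} {R : realType} (P : probability T R).
Variables (Y : T -> R) (theta : R).
Hypothesis mY : measurable_fun setT Y.
Hypothesis theta_gt0 : 0 < theta.
Hypothesis tailY : forall xi : R, 0 <= xi ->
  (P [set w | (xi <= `|Y w|)%R] <= (2 * expR (- (xi ^+ 2 * theta ^+ 2) / 2))%:E)%E.

Lemma tail_sqr_geometric (b t : R) (k : nat) : 0 <= b -> 0 <= t ->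
  (P [set w | (b + k%:R * (2 * t / theta ^+ 2) <= Y w ^+ 2)%R]
     <= (2 * expR (- (b * theta ^+ 2) / 2) * ((1 + t)^-1) ^+ k)%:E)%E.
Proof.
move=> b0 t0; set c := b + _.
have c0 : 0 <= c by rewrite /c; solve_ge0; rewrite invr_ge0; solve_ge0.
have -> : [set w | c <= Y w ^+ 2] = [set w | Num.sqrt c <= `|Y w|].
  by apply/seteqP; split => w /=; rewrite -sqrtr_sqr ler_sqrt // sqr_ge0.
apply: le_trans (tailY _ (sqrtr_ge0 c)) _.
rewrite lee_fin -mulrA ler_pM2l // sqr_sqrtr // !mulNr.
apply: expRN_le_geometric => //.
rewrite [leRHS](_ : _ = b * theta ^+ 2 / 2 + k%:R * t) // /c.
by field; rewrite gt_eqF.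
Qed.

Lemma tail_norm_geometric (a t : R) (k : nat) : 0 < a -> 0 <= t ->
  (P [set w | (a + k%:R * (t / (a * theta ^+ 2)) <= `|Y w|)%R]
     <= (2 * expR (- (a ^+ 2 * theta ^+ 2) / 2) * ((1 + t)^-1) ^+ k)%:E)%E.
Proof.
move=> a0 t0; apply: le_trans (tail_sqr_geometric _ _ k (sqr_ge0 a) t0).
apply: le_measure; rewrite ?inE; try by apply: measurable_ge_set; solve_measurable.
move=> w /=; set h := t / _ => le_w.
have h0 : 0 <= h by rewrite /h; solve_ge0; rewrite invr_ge0; solve_ge0.
apply: le_trans (_ : (a + k%:R * h) ^+ 2 <= _).
  rewrite sqrrD -addrA lerD2l [leLHS](_ : _ = a * (k%:R * h) *+ 2).
    by rewrite lerDl; solve_ge0.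
  by rewrite /h; field; rewrite !gt_eqF.
by rewrite -[Y w ^+ 2]ger0_norm ?sqr_ge0 // normrX ler_sqr ?nnegrE //; solve_ge0.
Qed.

Lemma integral_sqr_le : (\int[P]_w (Y w ^+ 2)%:E <= (4 / theta ^+ 2)%:E)%E.
Proof.
pose t : R := 5^-1; pose s := 2 * t / theta ^+ 2.
have t_ge0 : 0 <= t by rewrite invr_ge0.
have s_gt0 : 0 < s by rewrite divr_gt0 ?mulr_gt0 ?exprn_gt0 ?invr_gt0.
have q_eq : (1 + t)^-1 = 5 / 6 by rewrite /t; field.
have q01 : (0 < 5 / 6 :> R) && (5 / 6 < 1 :> R) by apply/andP; split; lra.
have tail k : (P [set w | (4%:R * s + k%:R * s <= Y w ^+ 2)%R]
    <= ((2 * (5 / 6) ^+ 4) * (5 / 6) ^+ k)%:E)%E.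
  have := tail_sqr_geometric 0 t (4 + k) (lexx 0) t_ge0.
  rewrite add0r natrD mulrDl => /le_trans; apply.
  by rewrite mul0r oppr0 mul0r expR0 mulr1 q_eq exprD mulrA.
have mY2 : measurable_fun setT (fun w => Y w ^+ 2) by solve_measurable.
have c_ge0 : 0 <= 2 * (5 / 6) ^+ 4 :> R by solve_ge0.
have excess := integral_pos_part_le_geometric P _ _ _ _ _ mY2 s_gt0 c_ge0 q01 tail.
apply: le_trans (_ : \int[P]_w (4%:R * s + Num.max (Y w ^+ 2 - 4%:R * s) 0)%:E <= _)%E.
  apply: ge0_le_integral => //.
  - by move=> w _; rewrite lee_fin; solve_ge0.
  - by apply/measurable_EFinP; solve_measurable.
  - by apply/measurable_EFinP; solve_measurable.
  - by move=> w _; rewrite lee_fin -lerBlDl le_max lexx.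
rewrite ge0_integralD_real; try by [solve_measurable | move=> ?; solve_ge0].
rewrite integral_cst //= probability_setT mule1.
apply: le_trans (leeD2l _ excess) _; rewrite -EFinD lee_fin.
(* this is (8 t + 4 (1 + t)^-3) / theta^2 for t = 1/5 *)
rewrite [leLHS](_ : _ = 2 / 5 * (4 + 12 * (5 / 6) ^+ 4) / theta ^+ 2).
  by rewrite ler_pM2r ?invr_gt0 ?exprn_gt0 // !exprS expr0; lra.
by rewrite /s /t; field; rewrite gt_eqF.
Qed.

Lemma integral_neg_part_fin_num : (\int[P]_w (Num.max (- Y w) 0)%:E)%E \is a fin_num.
Proof.
rewrite ge0_fin_numE; last by apply: integral_ge0 => w _; rewrite lee_fin; solve_ge0.
apply: le_lt_trans (ltry (1 + 4 / theta ^+ 2)).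
apply: le_trans (_ : \int[P]_w (1 + Y w ^+ 2)%:E <= _)%E.
  apply: ge0_le_integral => //.
  - by move=> w _; rewrite lee_fin; solve_ge0.
  - by apply/measurable_EFinP; solve_measurable.
  - by apply/measurable_EFinP; solve_measurable.
  - by move=> w _; rewrite lee_fin ge_max; apply/andP; split; nra.
rewrite ge0_integralD_real; try by [solve_measurable | move=> ?; solve_ge0].
by rewrite integral_cst //= probability_setT mule1 EFinD leeD2l ?integral_sqr_le.
Qed.

Lemma integral_sqr_le_tails_subgaussian (a : R) : 0 < a -> (\int[P]_w (Y w)%:E = 0)%E ->
  (\int[P]_w (Y w ^+ 2)%:E <= (2 * a ^+ 2)%:E * P [set w | (0 <= Y w)%R]
     + (expR (- (a ^+ 2 * theta ^+ 2) / 2)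
        * (6 * (a * theta) ^+ 2 + 48 / 5) / theta ^+ 2)%:E)%E.
Proof.
move=> a_gt0 Y0; set e := expR _.
pose t : R := 5^-1; pose h := t / (a * theta ^+ 2); pose s := 2 * t / theta ^+ 2.
have t_ge0 : 0 <= t by rewrite invr_ge0.
have h_gt0 : 0 < h by rewrite divr_gt0 ?mulr_gt0 ?exprn_gt0 ?invr_gt0.
have s_gt0 : 0 < s by rewrite divr_gt0 ?mulr_gt0 ?exprn_gt0 ?invr_gt0.
have q_eq : (1 + t)^-1 = 5 / 6 by rewrite /t; field.
have q01 : (0 < 5 / 6 :> R) && (5 / 6 < 1 :> R) by apply/andP; split; lra.
have e_ge0 : 0 <= 2 * e by rewrite mulr_ge0 ?expR_ge0.
have mYn : measurable_fun setT (fun w => `|Y w|) by solve_measurable.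
have mY2 : measurable_fun setT (fun w => Y w ^+ 2) by solve_measurable.
have J1 : (\int[P]_w (Num.max (`|Y w| - a) 0)%:E
    <= (h * (2 * e / (1 - 5 / 6)))%:E)%E.
  apply: integral_pos_part_le_geometric => // k.
  by have := tail_norm_geometric _ _ k a_gt0 t_ge0; rewrite q_eq.
have J2 : (\int[P]_w (Num.max (Y w ^+ 2 - a ^+ 2) 0)%:E
    <= (s * (2 * e / (1 - 5 / 6)))%:E)%E.
  apply: integral_pos_part_le_geometric => // k.
  by have := tail_sqr_geometric _ _ k (sqr_ge0 a) t_ge0; rewrite q_eq.
apply: le_trans (integral_sqr_le_tails P _ _ mY a_gt0 Y0 integral_neg_part_fin_num) _.
rewrite -!addeA leeD2l //.
apply: le_trans (_ : (3 * a ^+ 2)%:E * (2 * e)%:E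
    + ((2 * a)%:E * (h * (2 * e / (1 - 5 / 6)))%:E
    + (s * (2 * e / (1 - 5 / 6)))%:E) <= _)%E.
  apply: leeD.
    by apply: lee_wpmul2l; [rewrite lee_fin; solve_ge0 | exact: tailY (ltW a_gt0)].
  by apply: leeD => //; apply: lee_wpmul2l => //; rewrite lee_fin; solve_ge0.
rewrite -!EFinM -!EFinD lee_fin.
rewrite [leLHS](_ : _ = e * (6 * (a * theta) ^+ 2 + 48 / 5) / theta ^+ 2) //.
by rewrite /h /s /t; field; rewrite !gt_eqF.
Qed.

Lemma integral_sqr_le_prob_ge0 (a : R) : 0 < a -> (\int[P]_w (Y w)%:E = 0)%E ->
  (\int[P]_w (Y w ^+ 2)%:E <= (2 * a ^+ 2)%:E * P [set w | (0 <= Y w)%R]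
     + (expR (- (a ^+ 2 * theta ^+ 2) / 2)
        * (8 * (a * theta) ^+ 2 + 8 * (a * theta) + 4) / theta ^+ 2)%:E)%E.
Proof.
move=> a_gt0 Y0; set e := expR _; set u := a * theta.
have u_gt0 : 0 < u by rewrite mulr_gt0.
have [u_ge1|u_lt1] := lerP 1 u.
  apply: le_trans (integral_sqr_le_tails_subgaussian _ a_gt0 Y0) _.
  rewrite leeD2l // lee_fin -/e -/u ler_pM2r ?invr_gt0 ?exprn_gt0 //.
  by rewrite ler_pM2l ?expR_gt0 //; nra.
have e_ge : 1 - u ^+ 2 / 2 <= e.
  by apply: le_trans (expR_ge1Dx _); rewrite /u exprMn mulNr.
apply: le_trans integral_sqr_le _.
rewrite -[leLHS]add0e; apply: leeD.
  by apply: mule_ge0 => //; rewrite lee_fin; solve_ge0.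
rewrite lee_fin ler_pM2r ?invr_gt0 ?exprn_gt0 //.
have u2_le : u ^+ 2 <= u by rewrite expr2 ger_pMr // ltW.
have u3_le : u ^+ 3 <= u ^+ 2 by rewrite exprS ger_pMl ?exprn_gt0 // ltW.
have u4_le : u ^+ 4 <= u ^+ 3 by rewrite exprS ger_pMl ?exprn_gt0 // ltW.
have poly_ge0 : 0 <= 8 * u ^+ 2 + 8 * u + 4 by solve_ge0.
apply: le_trans (ler_wpM2r poly_ge0 e_ge).
rewrite [leRHS](_ : _ = 4 + 8 * u + 6 * u ^+ 2 - 4 * u ^+ 3 - 4 * u ^+ 4); first lra.
by rewrite !exprS expr0; field.
Qed.

End subgaussian.

Lemma variance_mean0 d (T : measurableType d) (R : realType) (P : probability T R)
    (X : T -> R) :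
  ('E_P[X] = 0)%E -> ('V_P[X] = \int[P]_w (X w ^+ 2)%:E)%E.
Proof.
move=> X0; rewrite /variance covariance.unlock X0 /= expectation.unlock.
by apply: eq_integral => w _; rewrite !fctE /= subr0 expr2.
Qed.

Lemma quadratic_le_gaussian_constant {R : realType} {a theta : R} : 0 < a -> 0 < theta ->
  (8 * (a * theta) ^+ 2 + 8 * (a * theta) + 4) / theta ^+ 2 <=
  4 * a ^+ 2 * (1 + Num.sqrt 2 + Num.sqrt (2 * pi) / (a * theta)
                + 1 / (a ^+ 2 * theta ^+ 2)).
Proof.
move=> a_gt0 theta_gt0; have u_gt0 : 0 < a * theta by rewrite mulr_gt0.
have sqrt2_ge1 : 1 <= Num.sqrt 2 :> R by rewrite -{1}sqrtr1 ler_wsqrtr // ler1n.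
have sqrt2pi_ge2 : 2 <= Num.sqrt (2 * pi) :> R.
  apply: le_trans (_ : Num.sqrt (2 ^+ 2) <= _); first by rewrite sqrtr_sqr ger0_norm.
  by rewrite ler_wsqrtr // expr2 ler_wpM2l // pi_ge2.
have sqrt2pi_div_ge : 2 / (a * theta) <= Num.sqrt (2 * pi) / (a * theta).
  by rewrite ler_pM2r ?invr_gt0.
rewrite [leLHS](_ : _ = 4 * a ^+ 2 * (2 + 2 / (a * theta) + 1 / (a ^+ 2 * theta ^+ 2))).
  by apply: ler_wpM2l; [solve_ge0 | lra].
by field; rewrite !gt_eqF.
Qed.

Theorem lemma6 (d : measure_display) (T : measurableType d) (R : realType)
  (P : probability T R) (Y : {RV P >-> R}) (theta : R) :
  ('E_P[Y] = 0)%E ->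
  0 < theta ->
  (forall xi : R, 0 <= xi ->
     (P [set w | (xi <= `|Y w|)%R] <= (2 * expR (- (xi ^+ 2 * theta ^+ 2) / 2))%:E)%E) ->
  forall a : R, 0 < a ->
  ('V_P[Y] * ((2 * a ^+ 2)^-1)%:E
     - (2 * expR (- (a ^+ 2 * theta ^+ 2) / 2) *
        (1 + Num.sqrt 2 + Num.sqrt (2 * pi) / (a * theta)
           + 1 / (a ^+ 2 * theta ^+ 2)))%:E
   <= P [set w | (0 <= Y w)%R])%E.
Proof.
move=> EY0 theta_gt0 tailY a a_gt0.
have mY : measurable_fun setT Y := measurable_funPT Y.
have Y0 : (\int[P]_w (Y w)%:E = 0)%E by rewrite -expectation_def.
have := integral_sqr_le_prob_ge0 P _ _ mY theta_gt0 tailY _ a_gt0 Y0.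
rewrite -variance_mean0 //; set S := [set w | _]; set e := expR _.
have PS_fin : P S \is a fin_num by apply: fin_num_measure; exact: measurable_ge_set.
rewrite -(fineK PS_fin) -EFinM => V_le.
have V_fin : 'V_P[Y] \is a fin_num.
  by rewrite ge0_fin_numE ?variance_ge0 //; apply: le_lt_trans V_le (ltry _).
rewrite -(fineK V_fin) -EFinD lee_fin in V_le.
rewrite -(fineK V_fin) -EFinM -EFinB lee_fin lerBlDr ler_pdivrMr ?mulr_gt0 ?exprn_gt0 //.
have e_gt0 : 0 < e by apply: expR_gt0.
have := ler_wpM2l (ltW e_gt0) (quadratic_le_gaussian_constant a_gt0 theta_gt0).
lra.
Qed.
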